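(* Let $M$ be a strongly regular $po$-$\Gamma$-semigroup. Then for every $a\in M$ there exist $y\in M$ and $\gamma,\mu\in\Gamma$ such that $$a\le a\gamma y\mu a,\quad y\le y\mu a\gamma y,\quad\text{and}\quad a\gamma y=y\gamma a=y\mu a=a\mu y.$$
   Context: A $po$-$\Gamma$-semigroup is a triple $(M,\Gamma,\le)$ where $M,\Gamma$ are nonempty sets with a map $M\times\Gamma\times M\to M$, $(a,\gamma,b)\mapsto a\gamma b$, satisfying $(a\gamma b)\mu c=a\gamma(b\mu c)$ for all $a,b,c\in M$, $\gamma,\mu\in\Gamma$, and $\le$ is a partial order on $M$ such that $a\le b$ implies $a\gamma c\le b\gamma c$ and $c\gamma a\le c\gamma b$ for all $c\in M$, $\gamma\in\Gamma$. $M$ is strongly regular if for every $a\in M$ there exist $x\in M$ and $\gamma,\mu\in\Gamma$ such that $a\le a\gamma x\mu a$ and $a\gamma x=x\gamma a=x\mu a=a\mu x$. *)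

From Stdlib Require Import RelationClasses.

Record poGammaSemigroup (M G : Type) : Type := {
  op : M -> G -> M -> M;
  le : M -> M -> Prop;
  M_inhabited : inhabited M;
  G_inhabited : inhabited G;
  op_assoc : forall (a b c : M) (g m : G), op (op a g b) m c = op a g (op b m c);
  le_refl : forall a, le a a;
  le_antisym : forall a b, le a b -> le b a -> a = b;
  le_trans : forall a b c, le a b -> le b c -> le a c;
  le_compat_r : forall a b c g, le a b -> le (op a g c) (op b g c);
  le_compat_l : forall a b c g, le a b -> le (op c g a) (op c g b)
}.

Arguments op {M G} _ _ _ _.
Arguments le {M G} _ _ _.

Definition strongly_regular {M G : Type} (S : poGammaSemigroup M G) : Prop :=
  forall a : M, exists (x : M) (g m : G),
    le S a (op S (op S a g x) m a) /\
    op S a g x = op S x g a /\ op S x g a = op S x m a /\ op S x m a = op S a m x.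


(* Put e := a γ x for the strongly regular witness x of a.  Then
   x γ a = x μ a = a μ x = e and e μ e = e γ e, and y := x μ a γ x
   satisfies a γ y = y γ a = y μ a = a μ y = e μ e.  The order
   statements come from iterating a <= e μ a (the regularity inequality)
   and its consequence e <= e μ e. *)

Section PoGammaSemigroup.

Variables (M G : Type) (S : poGammaSemigroup M G).

Local Notation "u ·[ g ] v" := (op S u g v) (at level 40, left associativity).

Lemma le_op_l_iter (e b : M) (m : G) : le S b (e ·[m] b) -> le S b (e ·[m] (e ·[m] b)).
Proof.
  intros H. eapply le_trans; [exact H |]. apply le_compat_l. exact H.
Qed.

Section RegularWitness.

Variables (a x : M) (g m : G).
Hypotheses (xga : x ·[g] a = a ·[g] x) (xma : x ·[m] a = a ·[g] x)
  (amx : a ·[m] x = a ·[g] x).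

Let e := a ·[g] x.

Lemma witness_op_m_a : e ·[m] a = e ·[g] a.
Proof.
  unfold e. rewrite !op_assoc, xma, xga. reflexivity.
Qed.

Lemma witness_op_m_self : e ·[m] e = e ·[g] e.
Proof.
  assert (H : e ·[m] e = e ·[m] a ·[m] x) by (rewrite op_assoc, amx; reflexivity).
  rewrite H, witness_op_m_a, op_assoc, amx. reflexivity.
Qed.

Let y := x ·[m] a ·[g] x.

Lemma witness_a_g_y : a ·[g] y = e ·[m] e.
Proof. unfold y, e. rewrite <- !op_assoc. reflexivity. Qed.

Lemma witness_y_g_a : y ·[g] a = e ·[g] e.
Proof. unfold y. rewrite xma, op_assoc, xga. reflexivity. Qed.

Lemma witness_y_m_a : y ·[m] a = e ·[g] e.
Proof. unfold y. rewrite xma, op_assoc, xma. reflexivity. Qed.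

Lemma witness_a_m_y : a ·[m] y = e ·[m] e.
Proof. unfold y. rewrite op_assoc, <- op_assoc, amx. reflexivity. Qed.

Hypothesis a_le : le S a (e ·[m] a).

Lemma witness_le_op_m_self : le S e (e ·[m] e).
Proof.
  change (le S (a ·[g] x) (e ·[m] (a ·[g] x))).
  rewrite <- op_assoc. apply le_compat_r. exact a_le.
Qed.

Lemma witness_le_a : le S a (a ·[g] y ·[m] a).
Proof.
  rewrite witness_a_g_y, op_assoc. apply le_op_l_iter. exact a_le.
Qed.

Lemma witness_le_y : le S y (y ·[m] a ·[g] y).
Proof.
  assert (Hy : y = x ·[m] e) by (unfold y, e; apply op_assoc).
  assert (Hyay : y ·[m] a ·[g] y = x ·[m] (e ·[m] (e ·[m] e)))
    by (unfold y, e; rewrite !op_assoc; reflexivity).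
  rewrite Hyay, Hy.
  apply le_compat_l, le_op_l_iter, witness_le_op_m_self.
Qed.

End RegularWitness.

End PoGammaSemigroup.

Theorem theorem8 (M G : Type) (S : poGammaSemigroup M G) :
  strongly_regular S ->
  forall a : M, exists (y : M) (g m : G),
    le S a (op S (op S a g y) m a) /\
    le S y (op S (op S y m a) g y) /\
    (op S a g y = op S y g a /\ op S y g a = op S y m a /\ op S y m a = op S a m y).
Proof.
  intros HS a. destruct (HS a) as (x & g & m & Ha & E1 & E2 & E3).
  assert (xga : op S x g a = op S a g x) by congruence.
  assert (xma : op S x m a = op S a g x) by congruence.
  assert (amx : op S a m x = op S a g x) by congruence.
  exists (op S (op S x m a) g x), g, m.
  repeat split.
  - apply witness_le_a; exact Ha.
  - apply witness_le_y; exact Ha.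
  - rewrite witness_a_g_y, witness_y_g_a by assumption.
    apply witness_op_m_self; assumption.
  - rewrite witness_y_g_a, witness_y_m_a by assumption. reflexivity.
  - rewrite witness_y_m_a, witness_a_m_y by assumption.
    symmetry. apply witness_op_m_self; assumption.
Qed.
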